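(* Let $s\ge1$, $M=(p^s-1)/2$, and $1\le l\le g$. Put $\delta_l=(2g+1)M-lp^s$. With respect to the lexicographic order of monomials with $z_1>z_2>\dots>z_n$, the leading term of $I^{[lp^s-1]}_{p^s}(z)$ is $$(-1)^{\delta_l}\binom{M}{l}\Big(0,\dots,0,\tfrac{l}{M},1,\dots,1\Big)\,z_1^M\cdots z_{2g-2l}^M\,z_{2g-2l+1}^{M-l},$$ where in the vector the entry $0$ is repeated $2g-2l$ times, followed by $l/M$ (in position $2g-2l+1$), followed by $2l$ entries equal to $1$. (The vector $\binom Ml(0,\dots,0,l/M,1,\dots,1)$ has integer entries.)
   Context: Let $p$ be an odd prime, $g\ge1$, $n=2g+1$, with $p>n$; $z=(z_1,\dots,z_n)$. For a positive integer $r$ put $M_r=(p^r-1)/2$, $\Phi_{p^r}(x,z)=\prod_{i=1}^n(x-z_i)^{M_r}$, expand $\Big(\frac{\Phi_{p^r}}{x-z_1},\dots,\frac{\Phi_{p^r}}{x-z_n}\Big)=\sum_iP^i_{p^r}(z)x^i$ with $P^i_{p^r}(z)\in\mathbb Z[z]^n$, and set $I^{[lp^r-1]}_{p^r}(z)=P^{lp^r-1}_{p^r}(z)$. Leading term: for a nonzero (vector) polynomial $f(z)=\sum_d a_dz_1^{d_1}\cdots z_n^{d_n}$ (with $a_d$ scalars or vectors), its leading term is the nonzero summand $a_dz^d$ whose monomial $z^d$ is largest in the lexicographic order with $z_1>\dots>z_n$. *)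

From HB Require Import structures.
From mathcomp Require Import all_boot all_order all_algebra.
From mathcomp Require Import multinomials.mpoly.
Set Implicit Arguments. Unset Strict Implicit. Unset Printing Implicit Defensive.
Import Order.TTheory GRing.Theory Num.Theory.
Local Open Scope ring_scope.

Definition Mr (p r : nat) : nat := ((p ^ r).-1 %/ 2)%N.

(* Phi_{p^r}(x,z)/(x - z_k) = (x - z_k)^(M_r - 1) * prod_{j <> k} (x - z_j)^(M_r),
   as a polynomial in x with coefficients in Z[z_1,...,z_n]. *)
Definition Phi_div (n p r : nat) (k : 'I_n) : {poly {mpoly int[n]}} :=
  ('X - ('X_k)%:P) ^+ (Mr p r).-1 *
  \prod_(j < n | j != k) ('X - ('X_j)%:P) ^+ Mr p r.

Definition Pvec (n p r i : nat) : 'I_n -> {mpoly int[n]} :=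
  fun k => (@Phi_div n p r k)`_i.

Definition Ivec (n p r l : nat) : 'I_n -> {mpoly int[n]} :=
  @Pvec n p r (l * p ^ r).-1.

Definition lex_lt (n : nat) (m1 m2 : 'X_{1..n}) : Prop :=
  exists i : 'I_n, (forall j : 'I_n, (j < i)%N -> m1 j = m2 j) /\ (m1 i < m2 i)%N.

Definition is_leading_term (n : nat) (f : 'I_n -> {mpoly int[n]})
    (c : 'I_n -> rat) (d : 'X_{1..n}) : Prop :=
  (exists k, c k != 0) /\
  (forall k, ((f k)@_d)%:~R = c k) /\
  (forall (m : 'X_{1..n}) k, lex_lt d m -> (f k)@_m = 0).

From HB Require Import structures.
From mathcomp Require Import all_boot all_order all_algebra.
From mathcomp Require Import multinomials.mpoly.
From mathcomp Require Import ring zify.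
Import Order.TTheory GRing.Theory Num.Theory.
Local Open Scope ring_scope.

(* The k-th component of Phi/(x - z_k) is the product
   \prod_j (x - z_j)^{e_j} with e_k = M - 1 and e_j = M otherwise (Phi_exp).
   Expanding every factor binomially, the coefficient of x^i z^m in
   \prod_j (x - z_j)^{e_j} is \prod_j (-1)^{m_j} C(e_j, m_j) when
   \sum_j (e_j - m_j) = i, and 0 otherwise; in particular it vanishes unless
   m <= e pointwise and |m| + i = |e| (coef_Xsub_prod and its two corollaries).
   For i = l p^s - 1 the z-degree is forced to be delta = A M + (M - l), with
   A = 2g - 2l.  Among monomials with all exponents <= M and this total
   degree, the lex-largest is the "greedy" monomial (M,...,M, M-l, 0,...,0)
   (greedy_mono, greedy_mono_lex_max), so all lex-larger coefficients vanish.
   Its own coefficient is 0 for k < A (there e_k = M - 1 < M), and for k >= A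
   it is (-1)^delta times C(M-1, M-l) = (l/M) C(M,l) if k = A, resp. C(M,l)
   if k > A (coef_greedy_large, binom_pred_ratio). *)

Definition Xsub_prod (R : comNzRingType) {n : nat} (e : 'I_n -> nat) : {poly {mpoly R[n]}} :=
  \prod_(j < n) ('X - ('X_j)%:P) ^+ e j.

(* Binomial expansion of (x - c)^e, with the index range padded to any E >= e
   so that all factors of a product can be expanded over a common range. *)
Lemma Xsub_exp_padded (R : comNzRingType) (c : R) (e E : nat) : (e <= E)%N ->
  ('X - c%:P) ^+ e =
  \sum_(a < E.+1) ((-1) ^+ a * ('C(e, a))%:R * c ^+ a)%:P * 'X^(e - a).
Proof.
move=> leeE; rewrite exprDn.
rewrite (big_ord_widen E.+1 (fun a => 'X ^+ (e - a) * (- c%:P) ^+ a *+ 'C(e, a))) //.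
rewrite big_mkcond /=; apply: eq_bigr => a _; case: ifP => lt_a_e.
  rewrite !rmorphM /= !rmorphXn /= rmorphN1 polyC_natr -mulr_natr.
  by rewrite -[- c%:P]mulN1r exprMn; ring.
by rewrite bin_small ?mulr0 ?mul0r ?rmorph0 // ltnNge -ltnS lt_a_e.
Qed.

Lemma multinom_sumU (n : nat) (f : 'I_n -> nat) :
  (\sum_j U_(j) *+ f j)%MM = [multinom f j | j < n].
Proof.
rewrite [in RHS](multinomUE_id [multinom f j | j < n]).
by apply: eq_bigr => j _; rewrite mnmE.
Qed.

(* Coefficient of x^i z^m in one term of the expanded product, indexed by the
   choice f j of the power of z_j taken from the j-th factor. *)
Lemma coef_expanded_term (R : comNzRingType) (n : nat) (e : 'I_n -> nat) (E : nat)
    (f : {ffun 'I_n -> 'I_E.+1}) (i : nat) (m : 'X_{1..n}) :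
  ((\prod_(j < n) (((-1) ^+ f j * ('C(e j, f j))%:R * ('X_j : {mpoly R[n]}) ^+ f j)%:P
                   * 'X^(e j - f j)))`_i)@_m
  = (\prod_j ((-1) ^+ f j * ('C(e j, f j))%:R)) * ([multinom (f j : nat) | j < n] == m)%:R
     * ((\sum_j (e j - f j))%N == i)%:R.
Proof.
rewrite big_split /= -rmorph_prod prodrXr coefCM coefXn mulr_natr mcoeffMn.
rewrite big_split /= mprodXnE multinom_sumU.
have -> : \prod_(j < n) ((-1) ^+ f j * ('C(e j, f j))%:R : {mpoly R[n]})
          = (\prod_j ((-1) ^+ f j * ('C(e j, f j))%:R))%:MP.
  by rewrite rmorph_prod; apply: eq_bigr => j _; rewrite rmorphM rmorphXn rmorphN1 rmorph_nat.
rewrite mcoeffCM mcoeffX [i == _]eq_sym.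
by case: (_ == i); case: (_ == m); rewrite /= ?mulr1n ?mulr0n ?mulr1 ?mulr0.
Qed.

(* The coefficient of x^i z^m in \prod_j (x - z_j)^{e_j}: only the term with
   f = m survives the expansion. *)
Lemma coef_Xsub_prod (R : comNzRingType) (n : nat) (e : 'I_n -> nat) (i : nat)
    (m : 'X_{1..n}) :
  ((Xsub_prod R e)`_i)@_m =
  \prod_j ((-1) ^+ m j * ('C(e j, m j))%:R) * ((\sum_j (e j - m j))%N == i)%:R.
Proof.
set E := (\sum_j e j)%N.
have leE j : (e j <= E)%N by rewrite /E (bigD1 j) //= leq_addr.
rewrite /Xsub_prod (eq_bigr _ (fun j _ => Xsub_exp_padded _ _ _ _ (leE j))) bigA_distr_bigA /=.
rewrite coef_sum (big_morph (mcoeff m) (mcoeffD m) (mcoeff0 _ m)).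
under eq_bigr do rewrite coef_expanded_term.
have [m_le_E | ] := boolP [forall j, m j <= E]%N.
  pose fm : {ffun 'I_n -> 'I_E.+1} := [ffun j => inord (m j)].
  have fmE j : (fm j : nat) = m j by rewrite ffunE inordK // ltnS; exact: (forallP m_le_E).
  rewrite (bigD1 fm) //= [X in _ + X]big1 ?addr0.
    have -> : [multinom (fm j : nat) | j < n] = m by apply/mnmP => j; rewrite mnmE fmE.
    rewrite eqxx mulr1; congr (_ * _); last by under eq_bigr do rewrite fmE.
    by apply: eq_bigr => j _; rewrite fmE.
  move=> f f_neq; case: eqP => [fm_eq|]; last by rewrite mulr0 mul0r.
  case/eqP: f_neq; apply/ffunP => j; apply: val_inj.
  by rewrite /= fmE -fm_eq mnmE.
rewrite negb_forall => /existsP [j]; rewrite -ltnNge => E_lt_mj.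
rewrite (bigD1 j) //= bin_small ?mulr0 ?mul0r ?big1 //; last exact: leq_ltn_trans (leE j) E_lt_mj.
move=> f _; case: eqP => [fm_eq|]; last by rewrite mulr0 mul0r.
by move: E_lt_mj; rewrite -fm_eq mnmE ltnNge -ltnS ltn_ord.
Qed.

Lemma coef_Xsub_prod_support (R : comNzRingType) (n : nat) (e : 'I_n -> nat) (i : nat)
    (m : 'X_{1..n}) :
  ((Xsub_prod R e)`_i)@_m != 0 ->
  (forall j, m j <= e j)%N /\ (\sum_j m j + i = \sum_j e j)%N.
Proof.
rewrite coef_Xsub_prod.
have [m_le_e | ] := boolP [forall j, m j <= e j]%N; last first.
  rewrite negb_forall => /existsP [j]; rewrite -ltnNge => e_lt_mj.
  by rewrite (bigD1 j) //= bin_small // mulr0 !mul0r eqxx.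
have {}m_le_e j : (m j <= e j)%N := forallP m_le_e j.
rewrite sumnB //; have [sum_eq _ | _] := eqVneq (\sum_j e j - \sum_j m j)%N i; last first.
  by rewrite mulr0 eqxx.
split=> //; rewrite -sum_eq subnKC //; exact: leq_sum.
Qed.

Lemma coef_Xsub_prod_on_support (R : comNzRingType) (n : nat) (e : 'I_n -> nat) (i : nat)
    (m : 'X_{1..n}) :
  (forall j, m j <= e j)%N -> (\sum_j m j + i = \sum_j e j)%N ->
  ((Xsub_prod R e)`_i)@_m = (-1) ^+ (\sum_j m j) * (\prod_j 'C(e j, m j))%:R.
Proof.
move=> m_le_e sum_eq; rewrite coef_Xsub_prod sumnB // -sum_eq addKn eqxx mulr1.
by rewrite big_split /= prodrXr natr_prod.
Qed.

Lemma lex_lt_sum_lt (n : nat) (d m : 'X_{1..n}) (A : nat) :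
  (forall j : 'I_n, (j < A)%N -> (m j <= d j)%N) ->
  (forall j : 'I_n, (A < j)%N -> d j = 0%N) ->
  lex_lt d m -> (\sum_j d j < \sum_j m j)%N.
Proof.
move=> m_le_d d_eq0 [i0 [eq_before d_lt_m]].
have A_le_i0 : (A <= i0)%N.
  by rewrite leqNgt; apply/negP => /m_le_d; rewrite leqNgt d_lt_m.
rewrite (bigD1 i0) // [X in (_ < X)%N](bigD1 i0) //= -addSn leq_add //.
apply: leq_sum => j j_neq; case: (ltngtP j i0) => [j_lt | i0_lt | /val_inj j_eq].
- by rewrite eq_before.
- by rewrite d_eq0 // (leq_ltn_trans A_le_i0 i0_lt).
- by rewrite j_eq eqxx in j_neq.
Qed.

Definition greedy_mono (n M A c : nat) : 'X_{1..n} :=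
  [multinom (if (i < A)%N then M else if i == A :> nat then c else 0%N) | i < n].

Lemma greedy_monoE (n M A c : nat) (j : 'I_n) :
  greedy_mono n M A c j = if (j < A)%N then M else if j == A :> nat then c else 0%N.
Proof. by rewrite mnmE. Qed.

Lemma greedy_mono_sum (n M A c : nat) :
  (A < n)%N -> (\sum_j greedy_mono n M A c j = A * M + c)%N.
Proof.
move=> A_lt_n; under eq_bigr do rewrite greedy_monoE.
rewrite -(big_mkord xpredT (fun j => if (j < A)%N then M else if j == A then c else 0%N)).
rewrite (@big_cat_nat _ _ _ A) ?(ltnW A_lt_n) //= (@big_cat_nat _ _ _ A.+1 A) //=.
rewrite big_nat1 ltnn eqxx.
rewrite [X in (_ + (_ + X))%N]big1_seq ?addn0; last first.
  move=> j /andP [_]; rewrite mem_index_iota => /andP [A_lt_j _].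
  by rewrite ltnNge ltnW //= gtn_eqF.
rewrite (eq_big_nat _ _ (F2 := fun _ => M)); last by move=> j /andP [_ ->].
by rewrite sum_nat_const_nat subn0.
Qed.

Lemma greedy_mono_lex_max (n M A c : nat) (m : 'X_{1..n}) :
  (A < n)%N -> (forall j, m j <= M)%N -> lex_lt (greedy_mono n M A c) m ->
  (A * M + c < \sum_j m j)%N.
Proof.
move=> A_lt_n m_le_M d_lt_m; rewrite -(@greedy_mono_sum n M A c A_lt_n).
apply: (@lex_lt_sum_lt n _ m A _ _ d_lt_m) => j j_lt; rewrite greedy_monoE.
- by rewrite j_lt m_le_M.
- by rewrite ltnNge (ltnW j_lt) gtn_eqF.
Qed.

Definition Phi_exp {n : nat} (M : nat) (k j : 'I_n) : nat := if j == k then M.-1 else M.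

Lemma Phi_div_Xsub_prod (n p r : nat) (k : 'I_n) :
  Phi_div p r k = Xsub_prod int (Phi_exp (Mr p r) k).
Proof.
rewrite /Phi_div /Xsub_prod /Phi_exp [in RHS](bigD1 k) //= eqxx; congr (_ * _).
by apply: eq_bigr => j /negbTE ->.
Qed.

Lemma Phi_exp_le {n : nat} (M : nat) (k j : 'I_n) : (Phi_exp M k j <= M)%N.
Proof. by rewrite /Phi_exp; case: (j == k); rewrite ?leq_pred. Qed.

Lemma Phi_exp_sum {n : nat} (M : nat) (k : 'I_n) :
  (0 < M)%N -> (\sum_j Phi_exp M k j = n * M - 1)%N.
Proof.
move=> M_gt0; rewrite (bigD1 k) //= /Phi_exp eqxx.
rewrite (eq_bigr (fun _ => M)); last by move=> j /negbTE ->.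
rewrite sum_nat_const cardC1 card_ord.
case: n k => [[] //|n] _; lia.
Qed.

Section CoefficientsAtGreedy.
Variables (R : comNzRingType) (n M A l i : nat).
Hypotheses (A_lt_n : (A < n)%N) (l_gt0 : (0 < l)%N) (l_le_M : (l <= M)%N).
Hypothesis degree : (i + (A * M + (M - l)) = n * M - 1)%N.

Local Notation d := (greedy_mono n M A (M - l)).
Local Notation coef k m := (((Xsub_prod R (Phi_exp M k))`_i)@_m).

Let M_gt0 : (0 < M)%N := leq_trans l_gt0 l_le_M.

(* For k < A the k-th exponent M - 1 is too small for the greedy monomial. *)
Lemma coef_greedy_small (k : 'I_n) : (k < A)%N -> coef k d = 0.
Proof.
move=> k_lt_A; apply/eqP; apply: contraT => /coef_Xsub_prod_support [d_le _].
by have := d_le k; rewrite greedy_monoE k_lt_A /Phi_exp eqxx; lia.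
Qed.

Lemma greedy_le_Phi_exp (k : 'I_n) : (A <= k)%N -> forall j, (d j <= Phi_exp M k j)%N.
Proof.
move=> A_le_k j; rewrite greedy_monoE /Phi_exp.
case: (ltnP j A) => [j_lt_A | A_le_j].
  by rewrite ifN //; apply: contraTneq j_lt_A => ->; rewrite -leqNgt.
case: (j == A :> nat); case: (j == k) => //; lia.
Qed.

(* Only position A contributes a nontrivial binomial factor. *)
Lemma prod_binom_greedy (k : 'I_n) : (A <= k)%N ->
  (\prod_j 'C(Phi_exp M k j, d j) = if k == A :> nat then 'C(M.-1, M - l) else 'C(M, l))%N.
Proof.
move=> A_le_k; pose a : 'I_n := Ordinal A_lt_n.
rewrite (bigD1 a) //= big1 ?muln1; last first.
  move=> j j_neq_a; have j_neq_A : (j == A :> nat) = false.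
    by apply: contraNF j_neq_a => /eqP j_eq; apply/eqP/val_inj.
  rewrite greedy_monoE /Phi_exp j_neq_A; case: (ltnP j A) => [j_lt_A | _]; last exact: bin0.
  by rewrite ifN ?binn //; apply: contraTneq j_lt_A => ->; rewrite -leqNgt.
rewrite greedy_monoE ltnn eqxx /Phi_exp [a == k]eq_sym.
case: (altP (k =P a)) => [-> | k_neq_a] /=; first by rewrite eqxx.
rewrite ifN ?bin_sub //; apply: contraNneq k_neq_a => k_eq; exact: val_inj.
Qed.

Lemma coef_greedy_large (k : 'I_n) : (A <= k)%N ->
  coef k d = (-1) ^+ (A * M + (M - l))
             * (if k == A :> nat then 'C(M.-1, M - l) else 'C(M, l))%:R.
Proof.
move=> A_le_k; rewrite coef_Xsub_prod_on_support ?greedy_mono_sum ?prod_binom_greedy //.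
- exact: greedy_le_Phi_exp.
- by rewrite ?greedy_mono_sum // Phi_exp_sum // addnC.
Qed.

Lemma coef_above_greedy (k : 'I_n) (m : 'X_{1..n}) : lex_lt d m -> coef k m = 0.
Proof.
move=> d_lt_m; apply/eqP; apply: contraT => /coef_Xsub_prod_support [m_le sum_m].
have m_le_M j : (m j <= M)%N := leq_trans (m_le j) (Phi_exp_le M k j).
have := @greedy_mono_lex_max n M A (M - l) m A_lt_n m_le_M d_lt_m.
by rewrite Phi_exp_sum // in sum_m; lia.
Qed.

End CoefficientsAtGreedy.

Lemma Mr_pow_odd {p : nat} (r : nat) : odd p -> (p ^ r = 2 * Mr p r + 1)%N.
Proof.
move=> p_odd; have : odd (p ^ r) by rewrite ssrnat.oddX p_odd orbT.
rewrite /Mr; lia.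
Qed.

Lemma g_lt_Mr {p s g : nat} : odd p -> (2 * g + 1 < p)%N -> (1 <= s)%N -> (g < Mr p s)%N.
Proof.
move=> p_odd p_gt s_ge1; have := Mr_pow_odd s p_odd.
have : (p ^ 1 <= p ^ s)%N by apply: leq_pexp2l => //; lia.
rewrite expn1; lia.
Qed.

(* The z-degree of the coefficient of x^{l p^s - 1}: with p^s = 2M + 1 it is
   (2g + 1) M - 1 - (l p^s - 1) = (2g - 2l) M + (M - l). *)
Lemma greedy_degree (g l M : nat) : (0 < l)%N -> (l <= g)%N -> (l <= M)%N ->
  ((l * (2 * M + 1)).-1 + ((2 * g - 2 * l) * M + (M - l)) = (2 * g + 1) * M - 1)%N.
Proof.
move=> l_gt0 l_le_g l_le_M.
have lM_le_gM : (l * M <= g * M)%N by rewrite leq_mul2r l_le_g orbT.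
rewrite mulnBl -!mulnA mulnDl mul1n mulnDr muln1 mulnCA; lia.
Qed.

Lemma binom_pred_ratio (F : numFieldType) (M l : nat) : (0 < l)%N -> (l <= M)%N ->
  ('C(M.-1, M - l))%:R = ('C(M, l))%:R * (l%:R / M%:R) :> F.
Proof.
move=> l_gt0 l_le_M; have M_neq0 : (M%:R : F) != 0 by rewrite pnatr_eq0 -lt0n; lia.
have -> : (M - l = M.-1 - l.-1)%N by lia.
rewrite bin_sub; last by lia.
apply: (mulfI M_neq0); rewrite -natrM mul_bin_diag prednK // natrM; field.
exact: M_neq0.
Qed.

Theorem lemma7p2 (p g s l : nat) :
  prime p -> odd p -> (1 <= g)%N -> (2 * g + 1 < p)%N ->
  (1 <= s)%N -> (1 <= l)%N -> (l <= g)%N ->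
  let n := (2 * g + 1)%N in
  let M := Mr p s in
  let delta : int := ((n * M)%:Z - (l * p ^ s)%:Z)%R in
  is_leading_term (@Ivec n p s l)
    (fun k : 'I_n =>
       (-1 : rat) ^ delta * ('C(M, l))%:R *
       (if (k < 2 * g - 2 * l)%N then 0
        else if k == (2 * g - 2 * l)%N :> nat then (l%:R / M%:R : rat)
        else 1))
    [multinom (if (i < 2 * g - 2 * l)%N then M
               else if i == (2 * g - 2 * l)%N :> nat then (M - l)%N
               else 0%N) | i < n].
Proof.
move=> _ p_odd _ p_gt s_ge1 l_ge1 l_le_g n M delta.
have pow_eq : (p ^ s = 2 * M + 1)%N := Mr_pow_odd s p_odd.
have l_le_M : (l <= M)%N := leq_trans l_le_g (ltnW (g_lt_Mr p_odd p_gt s_ge1)).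
set A := (2 * g - 2 * l)%N.
have A_lt_n : (A < n)%N by rewrite /A /n; lia.
have degree : ((l * p ^ s).-1 + (A * M + (M - l)) = n * M - 1)%N.
  by rewrite pow_eq greedy_degree.
have delta_eq : delta = (A * M + (M - l))%N :> int.
  have lp_gt0 : (0 < l * p ^ s)%N by rewrite pow_eq muln_gt0 l_ge1 addn1.
  by rewrite /delta; move: degree lp_gt0; lia.
have coefE (k : 'I_n) (m : 'X_{1..n}) :
    (@Ivec n p s l k)@_m = ((Xsub_prod int (Phi_exp M k))`_(l * p ^ s).-1)@_m.
  by rewrite /Ivec /Pvec Phi_div_Xsub_prod.
change [multinom _ | i < n] with (greedy_mono n M A (M - l)).
split; [|split].
- have last_lt_n : (2 * g < n)%N by rewrite /n addn1.
  exists (Ordinal last_lt_n); rewrite /= ifN -?leqNgt ?ifN ?mulr1; [|lia|lia].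
  by rewrite mulf_neq0 ?expfz_neq0 ?oppr_eq0 ?oner_eq0 // pnatr_eq0 -lt0n bin_gt0.
- move=> k; rewrite coefE; case: (ltnP k A) => [k_lt_A | A_le_k].
    by rewrite coef_greedy_small // mulr0.
  rewrite coef_greedy_large // delta_eq -exprnP intrM rmorphXn rmorphN1 rmorph_nat.
  by case: ifP => _; rewrite ?binom_pred_ratio // ?mulr1 ?mulrA.
- move=> m k d_lt_m.
  by rewrite coefE (@coef_above_greedy _ n M A l _ A_lt_n l_ge1 l_le_M degree).
Qed.
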